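(* Let $n$ be a positive even integer, $Q=[-1,1]^2$, $C_n=\frac{8}{(n+2)(n+3)}$, and let $MP_n=\{(x_m,y_{m,k}) : m=1,\dots,n+1,\ k=1,\dots,\tfrac n2+1\}$ be the Morrow-Patterson points, where $x_m=\cos\frac{m\pi}{n+2}$ and $y_{m,k}=\cos\frac{2k\pi}{n+3}$ if $m$ is odd, $y_{m,k}=\cos\frac{(2k-1)\pi}{n+3}$ if $m$ is even. Then: (i) For every polynomial $p\in\mathbb{P}^2_{2n}$, $$\frac{4}{\pi^2}\int_Q p(x,y)\sqrt{1-x^2}\sqrt{1-y^2}\,dx\,dy = C_n\sum_{m=1}^{n+1}\sum_{k=1}^{\frac n2+1}(1-x_m^2)(1-y_{m,k}^2)\,p(x_m,y_{m,k}).$$ (ii) Consequently, if $\omega_{m,k}$ is defined by $\frac{1}{\omega_{m,k}}=\sum_{i=0}^n\sum_{j=0}^{n-i}U_i^2(x_m)U_j^2(y_{m,k})$, then $\omega_{m,k}=C_n(1-x_m^2)(1-y_{m,k}^2)$. (iii) The projection $\mathcal C(Q)\to\mathbb{P}^2_n$ with respect to the discrete inner product $(u,v)_\star=\frac{\pi^2}{4}\sum_{m,k}\omega_{m,k}u(x_m,y_{m,k})v(x_m,y_{m,k})$ is an interpolation operator with nodes $MP_n$: for $f\in\mathcal C(Q)$ the polynomial $$L_nf(x,y)=C_n\sum_{m=1}^{n+1}\sum_{k=1}^{\frac n2+1}(1-x_m^2)(1-y_{m,k}^2)f(x_m,y_{m,k})\sum_{i=0}^n\sum_{j=0}^{n-i}U_i(x_m)U_j(y_{m,k})U_i(x)U_j(y)$$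 satisfies $L_nf(x_m,y_{m,k})=f(x_m,y_{m,k})$ for all $m,k$. (iv) The Lebesgue function of interpolation at $MP_n$ is $$\lambda_n(x,y)=C_n\sum_{m=1}^{n+1}\sum_{k=1}^{\frac n2+1}(1-x_m^2)(1-y_{m,k}^2)\Big|\sum_{i=0}^n\sum_{j=0}^{n-i}U_i(x_m)U_j(y_{m,k})U_i(x)U_j(y)\Big|.$$
   Context: $\mathbb{P}^2_d$ is the space of real bivariate polynomials of total degree at most $d$; $\mathcal C(Q)$ is the space of continuous real functions on $Q$. $U_j$ is the Chebyshev polynomial of the second kind of degree $j$, $U_j(\cos\theta)=\frac{\sin((j+1)\theta)}{\sin\theta}$. The set $MP_n$ has $\binom{n+2}{2}=\dim\mathbb{P}^2_n$ points. The Lebesgue function of interpolation at a unisolvent node set $\{a_s\}$ for $\mathbb{P}^2_n$ is $\lambda(x,y)=\sum_s|\ell_s(x,y)|$, where $\ell_s\in\mathbb{P}^2_n$ are the Lagrange basis polynomials ($\ell_s(a_t)=\delta_{st}$). *)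

From Stdlib Require Import Reals Lra Lia.
From Coquelicot Require Import Coquelicot.
Open Scope R_scope.

(* Chebyshev polynomials of the second kind:
   U_0 = 1, U_1 = 2x, U_{j+2} = 2x U_{j+1} - U_j
   (equivalently U_j(cos t) = sin((j+1)t)/sin t). *)
Fixpoint Ucheb (j : nat) (x : R) : R :=
  match j with
  | O => 1
  | S j' => match j' with
            | O => 2 * x
            | S j'' => 2 * x * Ucheb j' x - Ucheb j'' x
            end
  end.

Definition poly_eval (d : nat) (c : nat -> nat -> R) (x y : R) : R :=
  sum_n_m (fun i => sum_n_m (fun j => c i j * x ^ i * y ^ j) 0 (d - i)) 0 d.

Definition inP (d : nat) (g : R -> R -> R) : Prop :=
  exists c : nat -> nat -> R, forall x y, g x y = poly_eval d c x y.

Definition xMP (n m : nat) : R := cos (INR m * PI / INR (n + 2)).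
Definition yMP (n m k : nat) : R :=
  if Nat.odd m then cos (2 * INR k * PI / INR (n + 3))
  else cos ((2 * INR k - 1) * PI / INR (n + 3)).

Definition Cn (n : nat) : R := 8 / (INR (n + 2) * INR (n + 3)).

Definition sumMP (n : nat) (g : nat -> nat -> R) : R :=
  sum_n_m (fun m => sum_n_m (fun k => g m k) 1 (n / 2 + 1)) 1 (n + 1).

Definition in_MP_range (n m k : nat) : Prop :=
  (1 <= m <= n + 1)%nat /\ (1 <= k <= n / 2 + 1)%nat.

Definition Kn (n : nat) (a b x y : R) : R :=
  sum_n_m (fun i => sum_n_m (fun j =>
     Ucheb i a * Ucheb j b * Ucheb i x * Ucheb j y) 0 (n - i)) 0 n.

Definition omega (n m k : nat) : R :=
  / sum_n_m (fun i => sum_n_m (fun j =>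
       (Ucheb i (xMP n m)) ^ 2 * (Ucheb j (yMP n m k)) ^ 2) 0 (n - i)) 0 n.

Definition dinner (n : nat) (u v : R -> R -> R) : R :=
  PI ^ 2 / 4 * sumMP n (fun m k =>
    omega n m k * u (xMP n m) (yMP n m k) * v (xMP n m) (yMP n m k)).

Definition Ln (n : nat) (f : R -> R -> R) (x y : R) : R :=
  Cn n * sumMP n (fun m k =>
    (1 - xMP n m ^ 2) * (1 - yMP n m k ^ 2) * f (xMP n m) (yMP n m k)
    * Kn n (xMP n m) (yMP n m k) x y).

Definition inQ (x y : R) : Prop := -1 <= x <= 1 /\ -1 <= y <= 1.

Definition contQ (f : R -> R -> R) : Prop :=
  forall x y, inQ x y ->
    filterlim (fun z : R * R => f (fst z) (snd z))
      (within (fun z : R * R => inQ (fst z) (snd z)) (locally (x, y)))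
      (locally (f x y)).

Definition is_lagrange (n : nat) (l : nat -> nat -> R -> R -> R) : Prop :=
  forall m k, in_MP_range n m k ->
    inP n (l m k) /\
    forall m' k', in_MP_range n m' k' ->
      l m k (xMP n m') (yMP n m' k') =
        if (Nat.eqb m m' && Nat.eqb k k')%bool then 1 else 0.

Definition lebesgue_fun (n : nat) (l : nat -> nat -> R -> R -> R) (x y : R) : R :=
  sumMP n (fun m k => Rabs (l m k x y)).

From Stdlib Require Import Reals Lra Lia.
From Coquelicot Require Import Coquelicot.
Open Scope R_scope.

(* In the angles x = cos t, y = cos s the Morrow-Patterson nodes are t_m = m PI/(n+2) and, for
   odd resp. even m, the even resp. odd multiples of PI/(n+3).  Hence, for a product a(t) g(s) of
   functions vanishing at 0 and PI, the node sum splits by the parity of m into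
     (T_{n+2} a * T_{n+3} g - A_{n+2} a * A_{n+3} g) / 2,
   where T_N is the trapezoidal rule with N intervals on [0, PI], exact for cosine polynomials of
   degree < 2N, and A_N its alternating version, which vanishes on cosine polynomials of
   degree < N.  For (1-x^2)(1-y^2) x^i y^j with i + j <= 2n one of the alternating sums vanishes:
   this is the cubature formula (i).  Applied to products of the U_j it shows that the
   U_i(x) U_j(y), i + j <= n, are orthonormal for the discrete weights w.  So the kernel K
   reproduces P^2_n, and the symmetric matrix (sqrt (w_a w_b) K(a, b)) is idempotent with trace
   dim P^2_n = #MP_n, hence the identity: w_a K(a, b) = delta_ab.  This gives the weights (ii),
   identifies w_a K(a, .) as the Lagrange basis, and yields (iii) and (iv). *)

Lemma sum_n_m_Rplus (f g : nat -> R) a b :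
  (sum_n_m (fun l => f l + g l) a b : R) = sum_n_m f a b + sum_n_m g a b.
Proof. apply (sum_n_m_plus f g). Qed.

Lemma sum_n_m_Rmult_l (c : R) (f : nat -> R) a b :
  (sum_n_m (fun l => c * f l) a b : R) = c * sum_n_m f a b.
Proof. apply (sum_n_m_mult_l c f). Qed.

Lemma sum_n_m_Rminus (f g : nat -> R) a b :
  (sum_n_m (fun l => f l - g l) a b : R) = sum_n_m f a b - sum_n_m g a b.
Proof.
  rewrite (sum_n_m_ext _ (fun l => f l + (-1) * g l)) by (intros; simpl; ring).
  rewrite sum_n_m_Rplus, sum_n_m_Rmult_l. ring.
Qed.

Lemma sum_n_m_eq0 (f : nat -> R) a b :
  (forall l, (a <= l <= b)%nat -> f l = 0) -> (sum_n_m f a b : R) = 0.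
Proof.
  intros Hf. rewrite (sum_n_m_ext_loc _ (fun _ => zero)) by exact Hf.
  apply (sum_n_m_const_zero (G := R_AbelianMonoid)).
Qed.

Lemma sum_n_m_empty (f : nat -> R) a b : (b < a)%nat -> (sum_n_m f a b : R) = 0.
Proof. apply (sum_n_m_zero (G := R_AbelianMonoid)). Qed.

Lemma sum_n_m_swap (f : nat -> nat -> R) a b c d :
  (sum_n_m (fun i => sum_n_m (fun j => f i j) c d) a b : R) =
  sum_n_m (fun j => sum_n_m (fun i => f i j) a b) c d.
Proof.
  induction b as [|b IH].
  - destruct a.
    + rewrite sum_n_n. apply sum_n_m_ext. intros. now rewrite sum_n_n.
    + rewrite sum_n_m_empty by lia. symmetry.
      apply sum_n_m_eq0. intros. apply sum_n_m_empty. lia.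
  - destruct (Compare_dec.le_lt_dec a (S b)).
    + rewrite sum_n_Sm, IH by lia. rewrite <- sum_n_m_plus.
      apply sum_n_m_ext. intros. now rewrite sum_n_Sm by lia.
    + rewrite sum_n_m_empty by lia. symmetry.
      apply sum_n_m_eq0. intros. apply sum_n_m_empty. lia.
Qed.

Lemma sum_n_m_kronecker (g : nat -> R) a b c : (a <= c <= b)%nat ->
  (sum_n_m (fun l => if Nat.eqb l c then g l else 0) a b : R) = g c.
Proof.
  revert c. induction b as [|b IH]; intros c Hc.
  - assert (a = 0 /\ c = 0)%nat as [-> ->] by lia. now rewrite sum_n_n.
  - rewrite sum_n_Sm by lia. destruct (Nat.eq_dec c (S b)) as [->|Hne].
    + rewrite sum_n_m_eq0, Nat.eqb_refl.
      * apply Rplus_0_l.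
      * intros l Hl. destruct (Nat.eqb_spec l (S b)); [lia | reflexivity].
    + rewrite IH by lia. destruct (Nat.eqb_spec (S b) c); [lia | apply Rplus_0_r].
Qed.

Lemma sum_n_m_nonneg (f : nat -> R) a b :
  (forall l, (a <= l <= b)%nat -> 0 <= f l) -> 0 <= sum_n_m f a b.
Proof.
  induction b as [|b IH]; intros Hf.
  - destruct a.
    + rewrite sum_n_n. apply Hf. lia.
    + rewrite sum_n_m_empty by lia. apply Rle_refl.
  - destruct (Compare_dec.le_lt_dec a (S b)).
    + rewrite sum_n_Sm by lia. apply Rplus_le_le_0_compat.
      * destruct (Compare_dec.le_lt_dec a b).
        -- apply IH. intros. apply Hf. lia.
        -- rewrite sum_n_m_empty by lia. apply Rle_refl.
      * apply Hf. lia.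
    + rewrite sum_n_m_empty by lia. apply Rle_refl.
Qed.

Lemma sum_n_m_nonneg_eq0 (f : nat -> R) a b :
  (forall l, (a <= l <= b)%nat -> 0 <= f l) -> (sum_n_m f a b : R) = 0 ->
  forall l, (a <= l <= b)%nat -> f l = 0.
Proof.
  induction b as [|b IH]; intros Hf Hs l Hl.
  - assert (a = 0 /\ l = 0)%nat as [-> ->] by lia. now rewrite sum_n_n in Hs.
  - destruct (Compare_dec.le_lt_dec a b).
    + rewrite sum_n_Sm in Hs by lia.
      assert (0 <= sum_n_m f a b) by (apply sum_n_m_nonneg; intros; apply Hf; lia).
      assert (0 <= f (S b)) by (apply Hf; lia).
      change (sum_n_m f a b + f (S b) = 0) in Hs.
      destruct (Nat.eq_dec l (S b)) as [->|]; [lra |].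
      apply IH; [intros; apply Hf; lia | lra | lia].
    + assert (l = S b /\ a = S b) as [-> ->] by lia. now rewrite sum_n_n in Hs.
Qed.

Lemma pow_neg1_odd m : (-1) ^ m = if Nat.odd m then -1 else 1.
Proof.
  induction m as [|m IH]; [reflexivity|].
  rewrite <- tech_pow_Rmult, IH, Nat.odd_succ, <- Nat.negb_odd.
  destruct (Nat.odd m); simpl; ring.
Qed.

Lemma sum_n_m_pairs (G : nat -> R) K :
  (sum_n_m G 1 (2 * K) : R) = sum_n_m (fun k => G (2 * k)%nat + G (2 * k - 1)%nat) 1 K.
Proof.
  induction K as [|K IH].
  - now rewrite !sum_n_m_empty by lia.
  - replace (2 * S K)%nat with (S (S (2 * K))) by lia.
    rewrite sum_n_Sm, sum_n_Sm, IH, (sum_n_Sm _ 1 K) by lia.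
    replace (2 * S K)%nat with (S (S (2 * K))) by lia.
    replace (S (S (2 * K)) - 1)%nat with (S (2 * K)) by lia.
    unfold plus; simpl. ring.
Qed.

Lemma sum_n_m_alt_pairs (G : nat -> R) K :
  (sum_n_m (fun l => (-1) ^ l * G l) 1 (2 * K) : R)
  = sum_n_m (fun k => G (2 * k)%nat - G (2 * k - 1)%nat) 1 K.
Proof.
  rewrite sum_n_m_pairs. apply sum_n_m_ext_loc. intros k Hk.
  rewrite !pow_neg1_odd. replace (2 * k - 1)%nat with (S (2 * (k - 1))) by lia.
  rewrite Nat.odd_succ, Nat.even_mul, Nat.odd_mul. simpl. ring.
Qed.

Lemma ex_RInt_Rmult_l (c : R) (f : R -> R) a b :
  ex_RInt f a b -> ex_RInt (fun t => c * f t) a b.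
Proof. apply (ex_RInt_scal (V := R_NormedModule) f a b c). Qed.

Lemma RInt_Rplus (f g : R -> R) a b : ex_RInt f a b -> ex_RInt g a b ->
  (RInt (fun t => f t + g t) a b : R) = RInt f a b + RInt g a b.
Proof. apply (RInt_plus (V := R_CompleteNormedModule) f g). Qed.

Lemma RInt_Rmult_l (c : R) (f : R -> R) a b : ex_RInt f a b ->
  (RInt (fun t => c * f t) a b : R) = c * RInt f a b.
Proof. apply (RInt_scal (V := R_CompleteNormedModule) f a b c). Qed.

Lemma RInt_Rconst (c : R) a b : (RInt (fun _ => c) a b : R) = (b - a) * c.
Proof. apply (RInt_const (V := R_CompleteNormedModule)). Qed.

Lemma is_RInt_Rplus (f g : R -> R) a b If Ig :
  is_RInt f a b If -> is_RInt g a b Ig -> is_RInt (fun t => f t + g t) a b (If + Ig).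
Proof. apply (is_RInt_plus (V := R_NormedModule)). Qed.

Lemma is_RInt_Rmult_l (c : R) (f : R -> R) a b If :
  is_RInt f a b If -> is_RInt (fun t => c * f t) a b (c * If).
Proof. apply (is_RInt_scal (V := R_NormedModule)). Qed.

Lemma is_RInt_Rext (f g : R -> R) a b If :
  (forall t, f t = g t) -> is_RInt f a b If -> is_RInt g a b If.
Proof. intros H. apply is_RInt_ext. intros. apply H. Qed.

Lemma is_RInt_Rzero a b : is_RInt (fun _ => 0) a b 0.
Proof.
  pose proof (is_RInt_const (V := R_NormedModule) a b 0) as H.
  unfold scal in H; simpl in H; unfold mult in H; simpl in H.
  now rewrite Rmult_0_r in H.
Qed.

Lemma is_RInt_sum_n_m (F : nat -> R -> R) (I : nat -> R) a b p q :
  (forall l, is_RInt (F l) a b (I l)) ->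
  is_RInt (fun t => sum_n_m (fun l => F l t) p q) a b (sum_n_m I p q).
Proof.
  intros HF. induction q as [|q IH].
  - destruct p.
    + rewrite sum_n_n. apply (is_RInt_ext (F 0%nat)); [intros; now rewrite sum_n_n | apply HF].
    + rewrite sum_n_m_empty by lia.
      apply (is_RInt_ext (fun _ => 0)); [intros; symmetry; apply sum_n_m_empty; lia|].
      apply is_RInt_Rzero.
  - destruct (Compare_dec.le_lt_dec p (S q)).
    + rewrite sum_n_Sm by lia.
      apply (is_RInt_ext (fun t => sum_n_m (fun l => F l t) p q + F (S q) t)).
      * intros. now rewrite sum_n_Sm by lia.
      * now apply is_RInt_Rplus.
    + rewrite sum_n_m_empty by lia.
      apply (is_RInt_ext (fun _ => 0)); [intros; symmetry; apply sum_n_m_empty; lia|].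
      apply is_RInt_Rzero.
Qed.

Inductive span {T : Type} (G : (T -> R) -> Prop) : (T -> R) -> Prop :=
  | span_gen f : G f -> span G f
  | span_zero : span G (fun _ => 0)
  | span_plus f g : span G f -> span G g -> span G (fun t => f t + g t)
  | span_scal c f : span G f -> span G (fun t => c * f t)
  | span_ext f g : span G f -> (forall t, f t = g t) -> span G g.

Section Span.

Context {T : Type}.

Lemma span_incl (G G' : (T -> R) -> Prop) :
  (forall f, G f -> span G' f) -> forall f, span G f -> span G' f.
Proof.
  intros HG f Hf. induction Hf.
  - auto.
  - apply span_zero.
  - now apply span_plus.
  - now apply span_scal.
  - now apply (span_ext _ f).
Qed.

Lemma span_sum (G : (T -> R) -> Prop) (F : nat -> T -> R) a b :
  (forall l, (a <= l <= b)%nat -> span G (F l)) ->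
  span G (fun t => sum_n_m (fun l => F l t) a b).
Proof.
  induction b as [|b IH]; intros HF.
  - destruct a.
    + apply (span_ext _ (F 0%nat)); [apply HF; lia | intros; now rewrite sum_n_n].
    + apply (span_ext _ (fun _ => 0)); [apply span_zero | intros; now rewrite sum_n_m_empty by lia].
  - destruct (Compare_dec.le_lt_dec a (S b)).
    + apply (span_ext _ (fun t => sum_n_m (fun l => F l t) a b + F (S b) t)).
      * apply span_plus; [apply IH; intros; apply HF |apply HF]; lia.
      * intros. now rewrite sum_n_Sm by lia.
    + apply (span_ext _ (fun _ => 0)); [apply span_zero | intros; now rewrite sum_n_m_empty by lia].
Qed.

Lemma span_continuous {U : UniformSpace} (G : (U -> R) -> Prop) f x :
  (forall g, G g -> continuous g x) -> span G f -> continuous f x.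
Proof.
  intros HG Hf. induction Hf.
  - auto.
  - apply continuous_const.
  - now apply (continuous_plus f g).
  - now apply (continuous_scal_r c f).
  - now apply (continuous_ext f).
Qed.

End Span.

Lemma span_mul_comp {T T' : Type} (G : (T -> R) -> Prop) (G' : (T' -> R) -> Prop)
  (w : T' -> R) (p : T' -> T) :
  (forall g, G g -> span G' (fun z => w z * g (p z))) ->
  forall f, span G f -> span G' (fun z => w z * f (p z)).
Proof.
  intros HG f Hf. induction Hf.
  - auto.
  - apply (span_ext _ (fun _ => 0)); [apply span_zero | intros; ring].
  - apply (span_ext _ (fun z => w z * f (p z) + w z * g (p z))); [now apply span_plus | intros; ring].
  - apply (span_ext _ (fun z => c * (w z * f (p z)))); [now apply span_scal | intros; ring].
  - apply (span_ext _ (fun z => w z * f (p z))); [easy | intros; now rewrite H].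
Qed.

Lemma span_tensor {T1 T2 : Type} (G1 : (T1 -> R) -> Prop) (G2 : (T2 -> R) -> Prop)
  (G : (T1 * T2 -> R) -> Prop) f g :
  (forall a b, G1 a -> G2 b -> span G (fun z => a (fst z) * b (snd z))) ->
  span G1 f -> span G2 g -> span G (fun z => f (fst z) * g (snd z)).
Proof.
  intros HG Hf Hg.
  apply (span_mul_comp G2 G (fun z => f (fst z)) snd); [|exact Hg].
  intros b Hb.
  apply (span_ext _ (fun z => b (snd z) * f (fst z))); [|intros; ring].
  apply (span_mul_comp G1 G (fun z => b (snd z)) fst); [|exact Hf].
  intros a Ha. apply (span_ext _ (fun z => a (fst z) * b (snd z))); [auto | intros; ring].
Qed.

(** * The trapezoidal rule on cosine polynomials *)

Definition node_sum (N : nat) (h : R -> R) : R :=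
  sum_n_m (fun l => h (INR l * PI / INR N)) 1 (N - 1).

Definition alt_node_sum (N : nat) (h : R -> R) : R :=
  sum_n_m (fun l => (-1) ^ l * h (INR l * PI / INR N)) 1 (N - 1).

(* [PI / INR N * trapezoid N h] is the trapezoidal rule for [RInt h 0 PI] with [N] intervals. *)
Definition trapezoid (N : nat) (h : R -> R) : R :=
  / 2 * h 0 + node_sum N h + / 2 * h PI.

Definition alt_trapezoid (N : nat) (h : R -> R) : R :=
  / 2 * h 0 + alt_node_sum N h + / 2 * (-1) ^ N * h PI.

Lemma trapezoid_ext N h g : (forall t, h t = g t) -> trapezoid N h = trapezoid N g.
Proof.
  intros H. unfold trapezoid, node_sum. rewrite !H.
  now rewrite (sum_n_m_ext _ (fun l => g (INR l * PI / INR N))).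
Qed.

Lemma trapezoid_plus N h g :
  trapezoid N (fun t => h t + g t) = trapezoid N h + trapezoid N g.
Proof. unfold trapezoid, node_sum. rewrite sum_n_m_Rplus. ring. Qed.

Lemma trapezoid_scal N c h : trapezoid N (fun t => c * h t) = c * trapezoid N h.
Proof. unfold trapezoid, node_sum. rewrite sum_n_m_Rmult_l. ring. Qed.

Lemma alt_trapezoid_ext N h g :
  (forall t, h t = g t) -> alt_trapezoid N h = alt_trapezoid N g.
Proof.
  intros H. unfold alt_trapezoid, alt_node_sum. rewrite !H.
  now rewrite (sum_n_m_ext _ (fun l => (-1) ^ l * g (INR l * PI / INR N))) by (intros; now rewrite H).
Qed.

Lemma alt_trapezoid_plus N h g :
  alt_trapezoid N (fun t => h t + g t) = alt_trapezoid N h + alt_trapezoid N g.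
Proof.
  unfold alt_trapezoid, alt_node_sum.
  rewrite (sum_n_m_ext _ (fun l => (-1) ^ l * h (INR l * PI / INR N)
                                 + (-1) ^ l * g (INR l * PI / INR N))) by (intros; simpl; ring).
  rewrite sum_n_m_Rplus. ring.
Qed.

Lemma alt_trapezoid_scal N c h : alt_trapezoid N (fun t => c * h t) = c * alt_trapezoid N h.
Proof.
  unfold alt_trapezoid, alt_node_sum.
  rewrite (sum_n_m_ext _ (fun l => c * ((-1) ^ l * h (INR l * PI / INR N)))) by (intros; simpl; ring).
  rewrite sum_n_m_Rmult_l. ring.
Qed.

Lemma sin_nat_PI L : sin (INR L * PI) = 0.
Proof.
  induction L as [|L IH].
  - now rewrite Rmult_0_l, sin_0.
  - rewrite S_INR, Rmult_plus_distr_r, Rmult_1_l, neg_sin, IH. ring.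
Qed.

Lemma cos_plus_nat_PI a L : cos (a + INR L * PI) = (-1) ^ L * cos a.
Proof.
  induction L as [|L IH].
  - rewrite Rmult_0_l, Rplus_0_r. ring.
  - rewrite S_INR, Rmult_plus_distr_r, Rmult_1_l, <- Rplus_assoc, neg_cos, IH. simpl. ring.
Qed.

Lemma sum_cos_telescope x M :
  2 * sin (x / 2) * sum_n_m (fun l => cos (INR l * x)) 1 M
  = sin ((INR M + / 2) * x) - sin (x / 2).
Proof.
  induction M as [|M IH].
  - rewrite sum_n_m_empty by lia. replace ((INR 0 + / 2) * x) with (x / 2) by (simpl; field). ring.
  - rewrite sum_n_Sm by lia. change (plus ?a ?b) with (a + b).
    rewrite Rmult_plus_distr_l, IH, S_INR.
    replace ((INR M + 1 + / 2) * x) with ((INR M + 1) * x + x / 2) by field.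
    replace ((INR M + / 2) * x) with ((INR M + 1) * x - x / 2) by field.
    rewrite sin_plus, sin_minus. ring.
Qed.

Lemma trapezoid_cos N L : (1 <= N)%nat -> (L <= 2 * N - 1)%nat ->
  trapezoid N (fun t => cos (INR L * t)) = if Nat.eqb L 0 then INR N else 0.
Proof.
  intros HN HL. unfold trapezoid, node_sum.
  assert (HNr : 1 <= INR N) by (apply (le_INR 1); lia).
  destruct (Nat.eqb_spec L 0) as [->|HL0].
  - rewrite (sum_n_m_ext _ (fun _ => 1)) by (intros; simpl; now rewrite Rmult_0_l, cos_0).
    rewrite sum_n_m_const. replace (S (N - 1) - 1)%nat with (N - 1)%nat by lia.
    rewrite minus_INR by lia. simpl. rewrite !Rmult_0_l, cos_0. field.
  - set (x := INR L * PI / INR N).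
    assert (HLr : 1 <= INR L) by (apply (le_INR 1); lia).
    assert (HL2 : INR L <= 2 * INR N - 1).
    { apply le_INR in HL. rewrite minus_INR, mult_INR in HL by lia. simpl in HL. lra. }
    assert (Hsin : 0 < sin (x / 2)).
    { assert (Hpi := PI_RGT_0). apply sin_gt_0; unfold x.
      - apply Rdiv_lt_0_compat; [apply Rdiv_lt_0_compat|]; nra.
      - apply (Rmult_lt_reg_r (2 * INR N)); [lra|].
        replace (INR L * PI / INR N / 2 * (2 * INR N)) with (INR L * PI) by (field; lra). nra. }
    rewrite (sum_n_m_ext _ (fun l => cos (INR l * x))) by (intros; unfold x; f_equal; field; lra).
    apply (Rmult_eq_reg_l (2 * sin (x / 2))); [|lra].
    transitivity (sin (x / 2) * (cos (INR L * 0) + cos (INR L * PI))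
                  + 2 * sin (x / 2) * sum_n_m (fun l => cos (INR l * x)) 1 (N - 1)); [field|].
    rewrite sum_cos_telescope, minus_INR by lia.
    replace ((INR N - INR 1 + / 2) * x) with (INR L * PI - x / 2) by (unfold x; simpl; field; lra).
    rewrite sin_minus, sin_nat_PI, Rmult_0_r, cos_0. ring.
Qed.

Lemma alt_trapezoid_cos N L : (1 <= N)%nat -> (L <= N - 1)%nat ->
  alt_trapezoid N (fun t => cos (INR L * t)) = 0.
Proof.
  intros HN HL.
  assert (HNr : 1 <= INR N) by (apply (le_INR 1); lia).
  transitivity (trapezoid N (fun t => cos (INR (L + N) * t))).
  - unfold alt_trapezoid, trapezoid, alt_node_sum, node_sum.
    rewrite (sum_n_m_ext _ (fun l => cos (INR (L + N) * (INR l * PI / INR N)))).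
    + rewrite Rmult_assoc, <- cos_plus_nat_PI, plus_INR, !Rmult_0_r.
      replace (INR L * PI + INR N * PI) with ((INR L + INR N) * PI) by ring. reflexivity.
    + intros l. rewrite <- cos_plus_nat_PI. f_equal. rewrite plus_INR. field. lra.
  - rewrite trapezoid_cos by lia. destruct (Nat.eqb_spec (L + N) 0); [lia | reflexivity].
Qed.

Definition cos_gen (d : nat) (h : R -> R) : Prop :=
  exists l, (l <= d)%nat /\ h = fun t => cos (INR l * t).

Lemma cos_gen_incl d d' : (d <= d')%nat ->
  forall h, span (cos_gen d) h -> span (cos_gen d') h.
Proof.
  intros Hd. apply span_incl. intros h [l [Hl ->]].
  apply span_gen. exists l. split; [lia | reflexivity].
Qed.

Lemma continuous_cos_mul l t : continuous (fun t => cos (INR l * t)) t.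
Proof. apply (ex_derive_continuous (fun t => cos (INR l * t))). auto_derive. auto. Qed.

Lemma ex_RInt_cos_poly d h a b : span (cos_gen d) h -> ex_RInt h a b.
Proof.
  intros Hh. apply (ex_RInt_continuous (V := R_CompleteNormedModule)). intros t _.
  apply (span_continuous (cos_gen d)); [|exact Hh].
  intros g [l [_ ->]]. apply continuous_cos_mul.
Qed.

Lemma RInt_cos_mul l :
  (RInt (fun t => cos (INR l * t)) 0 PI : R) = if Nat.eqb l 0 then PI else 0.
Proof.
  destruct (Nat.eqb_spec l 0) as [->|Hl].
  - rewrite (RInt_ext _ (fun _ => 1)) by (intros; simpl; now rewrite Rmult_0_l, cos_0).
    rewrite RInt_Rconst. ring.
  - assert (Hlr : 0 < INR l) by (apply lt_0_INR; lia).
    assert (Hint : is_RInt (fun t => cos (INR l * t)) 0 PI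
                     (minus (sin (INR l * PI) / INR l) (sin (INR l * 0) / INR l))).
    { apply (is_RInt_derive (fun t => sin (INR l * t) / INR l)).
      - intros t _. auto_derive; [easy | field; lra].
      - intros t _. apply continuous_cos_mul. }
    rewrite (is_RInt_unique _ _ _ _ Hint), sin_nat_PI, Rmult_0_r, sin_0.
    unfold minus, plus, opp; simpl. field. lra.
Qed.

Lemma trapezoid_exact N d h : (1 <= N)%nat -> (d <= 2 * N - 1)%nat ->
  span (cos_gen d) h -> trapezoid N h = INR N / PI * RInt h 0 PI.
Proof.
  intros HN Hd Hh. assert (Hpi := PI_RGT_0). induction Hh as [h [l [Hl ->]]| | f g Hf IHf Hg IHg
    | c f Hf IHf | f g Hf IHf Hfg].
  - rewrite RInt_cos_mul, trapezoid_cos by lia. destruct (Nat.eqb l 0); field; lra.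
  - unfold trapezoid, node_sum. rewrite sum_n_m_eq0, RInt_Rconst by easy. ring.
  - rewrite trapezoid_plus, IHf, IHg, RInt_Rplus by (eapply ex_RInt_cos_poly; eauto). ring.
  - rewrite trapezoid_scal, IHf, RInt_Rmult_l by (eapply ex_RInt_cos_poly; eauto). ring.
  - rewrite <- (trapezoid_ext N f g), IHf by exact Hfg. f_equal. apply RInt_ext. auto.
Qed.

Lemma alt_trapezoid_cos_poly_eq0 N d h : (1 <= N)%nat -> (d <= N - 1)%nat ->
  span (cos_gen d) h -> alt_trapezoid N h = 0.
Proof.
  intros HN Hd Hh. induction Hh as [h [l [Hl ->]]| | f g Hf IHf Hg IHg
    | c f Hf IHf | f g Hf IHf Hfg].
  - apply alt_trapezoid_cos; lia.
  - unfold alt_trapezoid, alt_node_sum. rewrite sum_n_m_eq0 by (intros; simpl; ring). ring.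
  - rewrite alt_trapezoid_plus, IHf, IHg. ring.
  - rewrite alt_trapezoid_scal, IHf. ring.
  - now rewrite <- (alt_trapezoid_ext N f g).
Qed.

Lemma cos_poly_mul_cos d h :
  span (cos_gen d) h -> span (cos_gen (S d)) (fun t => cos t * h t).
Proof.
  apply (span_mul_comp (cos_gen d) (cos_gen (S d)) cos id).
  intros g [[|l] [Hl ->]]; unfold id.
  - apply (span_ext _ (fun t => cos (INR 1 * t))).
    + apply span_gen. exists 1%nat. split; [lia | reflexivity].
    + intros t. simpl. rewrite Rmult_0_l, Rmult_1_l, cos_0. ring.
  - apply (span_ext _ (fun t => / 2 * cos (INR (S (S l)) * t) + / 2 * cos (INR l * t))).
    + apply span_plus; apply span_scal; apply span_gen; eexists; split; [|reflexivity| |reflexivity]; lia.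
    + intros t. rewrite !S_INR.
      replace ((INR l + 1 + 1) * t) with ((INR l + 1) * t + t) by ring.
      replace (INR l * t) with ((INR l + 1) * t - t) by ring.
      rewrite cos_plus, cos_minus. field.
Qed.

Lemma cos_pow_cos_poly p : span (cos_gen p) (fun t => cos t ^ p).
Proof.
  induction p as [|p IH].
  - apply (span_ext _ (fun t => cos (INR 0 * t))).
    + apply span_gen. exists 0%nat. split; [lia | reflexivity].
    + intros t. simpl. now rewrite Rmult_0_l, cos_0.
  - exact (cos_poly_mul_cos p _ IH).
Qed.

Definition sin2_cos_pow (p : nat) (t : R) : R := (1 - cos t ^ 2) * cos t ^ p.

Lemma sin2_cos_pow_0 p : sin2_cos_pow p 0 = 0.
Proof. unfold sin2_cos_pow. rewrite cos_0. ring. Qed.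

Lemma sin2_cos_pow_PI p : sin2_cos_pow p PI = 0.
Proof. unfold sin2_cos_pow. rewrite cos_PI. ring. Qed.

Lemma sin2_cos_pow_cos_poly p : span (cos_gen (p + 2)) (sin2_cos_pow p).
Proof.
  apply (span_ext _ (fun t => cos t ^ p + (-1) * cos t ^ (p + 2))).
  - apply span_plus.
    + apply (cos_gen_incl p); [lia | apply cos_pow_cos_poly].
    + apply span_scal, cos_pow_cos_poly.
  - intros t. unfold sin2_cos_pow. rewrite pow_add. ring.
Qed.

(** * Chebyshev polynomials of the second kind *)

Lemma Ucheb_SS i x : Ucheb (S (S i)) x = 2 * x * Ucheb (S i) x - Ucheb i x.
Proof. reflexivity. Qed.

Lemma sin_mul_Ucheb i t : sin t * Ucheb i (cos t) = sin (INR (S i) * t).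
Proof.
  enough (H : sin t * Ucheb i (cos t) = sin (INR (S i) * t) /\
              sin t * Ucheb (S i) (cos t) = sin (INR (S (S i)) * t)) by apply H.
  induction i as [|i [IH1 IH2]].
  - simpl. rewrite Rmult_1_l, Rmult_1_r. split; [reflexivity|].
    replace ((1 + 1) * t) with (t + t) by ring. rewrite sin_plus. ring.
  - split; [exact IH2|].
    rewrite Ucheb_SS.
    replace (sin t * (2 * cos t * Ucheb (S i) (cos t) - Ucheb i (cos t)))
      with (2 * cos t * (sin t * Ucheb (S i) (cos t)) - sin t * Ucheb i (cos t)) by ring.
    rewrite IH1, IH2, !S_INR.
    replace ((INR i + 1 + 1 + 1) * t) with ((INR i + 1 + 1) * t + t) by ring.
    replace ((INR i + 1) * t) with ((INR i + 1 + 1) * t - t) by ring.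
    rewrite sin_plus, sin_minus. ring.
Qed.

Lemma one_minus_cos_sq t : 1 - cos t ^ 2 = sin t * sin t.
Proof. rewrite <- (sin2_cos2 t). unfold Rsqr. ring. Qed.

Definition cheb_prod (i j : nat) (t : R) : R :=
  (1 - cos t ^ 2) * Ucheb i (cos t) * Ucheb j (cos t).

(* [i - j + (j - i)] is the distance [|i - j|] in truncated subtraction. *)
Lemma cheb_prod_cos i j t :
  cheb_prod i j t = / 2 * cos (INR (i - j + (j - i)) * t) - / 2 * cos (INR (i + j + 2) * t).
Proof.
  unfold cheb_prod. rewrite one_minus_cos_sq.
  replace (sin t * sin t * Ucheb i (cos t) * Ucheb j (cos t))
    with ((sin t * Ucheb i (cos t)) * (sin t * Ucheb j (cos t))) by ring.
  rewrite !sin_mul_Ucheb.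
  replace (INR (i + j + 2) * t) with (INR (S i) * t + INR (S j) * t)
    by (rewrite !plus_INR, !S_INR; simpl; ring).
  rewrite cos_plus.
  destruct (Compare_dec.le_lt_dec j i).
  - replace (i - j + (j - i))%nat with (i - j)%nat by lia.
    replace (INR (i - j) * t) with (INR (S i) * t - INR (S j) * t)
      by (rewrite minus_INR, !S_INR by lia; ring).
    rewrite cos_minus. field.
  - replace (i - j + (j - i))%nat with (j - i)%nat by lia.
    replace (INR (j - i) * t) with (INR (S j) * t - INR (S i) * t)
      by (rewrite minus_INR, !S_INR by lia; ring).
    rewrite cos_minus. field.
Qed.

Lemma cheb_prod_0 i j : cheb_prod i j 0 = 0.
Proof. unfold cheb_prod. rewrite cos_0. ring. Qed.

Lemma cheb_prod_PI i j : cheb_prod i j PI = 0.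
Proof. unfold cheb_prod. rewrite cos_PI. ring. Qed.

Lemma cheb_prod_cos_poly i j : span (cos_gen (i + j + 2)) (cheb_prod i j).
Proof.
  apply (span_ext _ (fun t => / 2 * cos (INR (i - j + (j - i)) * t)
                            + (- / 2) * cos (INR (i + j + 2) * t))).
  - apply span_plus; apply span_scal, span_gen; eexists; split; [|reflexivity| |reflexivity]; lia.
  - intros t. rewrite cheb_prod_cos. ring.
Qed.

Lemma RInt_cheb_prod i j :
  (RInt (cheb_prod i j) 0 PI : R) = if Nat.eqb i j then PI / 2 else 0.
Proof.
  set (c1 := fun t => cos (INR (i - j + (j - i)) * t)).
  set (c2 := fun t => cos (INR (i + j + 2) * t)).
  assert (E1 : ex_RInt c1 0 PI).
  { apply (ex_RInt_cos_poly (i - j + (j - i))), span_gen. now exists (i - j + (j - i))%nat. }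
  assert (E2 : ex_RInt c2 0 PI).
  { apply (ex_RInt_cos_poly (i + j + 2)), span_gen. now exists (i + j + 2)%nat. }
  rewrite (RInt_ext _ (fun t => / 2 * c1 t + (- / 2) * c2 t))
    by (intros; unfold c1, c2; rewrite cheb_prod_cos; simpl; ring).
  rewrite RInt_Rplus, !RInt_Rmult_l by (first [assumption | apply ex_RInt_Rmult_l; assumption]).
  unfold c1, c2. rewrite !RInt_cos_mul.
  destruct (Nat.eqb_spec (i + j + 2) 0); [lia|].
  destruct (Nat.eqb_spec i j), (Nat.eqb_spec (i - j + (j - i)) 0); try lia; field.
Qed.

Lemma even_double n : Nat.even n = true -> n = (2 * (n / 2))%nat.
Proof.
  intros H. apply Nat.even_spec in H as [h ->].
  rewrite Nat.mul_comm, Nat.div_mul; lia.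
Qed.

Definition sum_triangle (n : nat) (F : nat -> nat -> R) : R :=
  sum_n_m (fun i => sum_n_m (fun j => F i j) 0 (n - i)) 0 n.

Lemma sum_triangle_ext n F G :
  (forall i j, (i + j <= n)%nat -> F i j = G i j) -> sum_triangle n F = sum_triangle n G.
Proof.
  intros H. apply sum_n_m_ext_loc. intros i Hi. apply sum_n_m_ext_loc. intros j Hj.
  apply H. lia.
Qed.

Lemma sum_triangle_scal n c F :
  sum_triangle n (fun i j => c * F i j) = c * sum_triangle n F.
Proof.
  unfold sum_triangle. rewrite <- sum_n_m_Rmult_l.
  apply sum_n_m_ext. intros. apply sum_n_m_Rmult_l.
Qed.

Lemma sum_triangle_plus n F G :
  sum_triangle n (fun i j => F i j + G i j) = sum_triangle n F + sum_triangle n G.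
Proof.
  unfold sum_triangle. rewrite <- sum_n_m_Rplus.
  apply sum_n_m_ext. intros. apply sum_n_m_Rplus.
Qed.

Lemma sum_triangle_kronecker n i0 j0 (F : nat -> nat -> R) : (i0 + j0 <= n)%nat ->
  sum_triangle n (fun i j => if (Nat.eqb i i0 && Nat.eqb j j0)%bool then F i j else 0) = F i0 j0.
Proof.
  intros H. unfold sum_triangle.
  rewrite (sum_n_m_ext _ (fun i => if Nat.eqb i i0
             then sum_n_m (fun j => if Nat.eqb j j0 then F i j else 0) 0 (n - i) else 0)).
  - rewrite sum_n_m_kronecker by lia. apply sum_n_m_kronecker. lia.
  - intros i. destruct (Nat.eqb i i0); [reflexivity|]. now apply sum_n_m_eq0.
Qed.

Lemma sum_triangle_count n : sum_triangle n (fun _ _ => 1) = INR (n + 1) * INR (n + 2) / 2.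
Proof.
  unfold sum_triangle.
  rewrite (sum_n_m_ext _ (fun i => INR (S (n - i)))).
  2:{ intros i. rewrite sum_n_m_const. replace (S (n - i) - 0)%nat with (S (n - i)) by lia. simpl. ring. }
  enough (H : forall M, (M <= n)%nat -> (sum_n_m (fun i => INR (S (n - i))) 0 M : R)
                        = INR (M + 1) * INR (n + 1) - INR M * INR (M + 1) / 2).
  { rewrite H by lia. rewrite !plus_INR. simpl. field. }
  induction M as [|M IH]; intros HM.
  - rewrite sum_n_n, Nat.sub_0_r, !plus_INR, S_INR. simpl. field.
  - rewrite sum_n_Sm, IH by lia. replace (S (n - S M)) with (n - M)%nat by lia.
    change (plus ?a ?b) with (a + b). rewrite minus_INR by lia. rewrite !plus_INR, !S_INR. simpl INR. field.
Qed.

Lemma sumMP_ext n F G :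
  (forall m k, in_MP_range n m k -> F m k = G m k) -> sumMP n F = sumMP n G.
Proof.
  intros H. apply sum_n_m_ext_loc. intros m Hm. apply sum_n_m_ext_loc. intros k Hk.
  apply H. split; lia.
Qed.

Lemma sumMP_scal n c F : sumMP n (fun m k => c * F m k) = c * sumMP n F.
Proof.
  unfold sumMP. rewrite <- sum_n_m_Rmult_l.
  apply sum_n_m_ext. intros. apply sum_n_m_Rmult_l.
Qed.

Lemma sumMP_plus n F G : sumMP n (fun m k => F m k + G m k) = sumMP n F + sumMP n G.
Proof.
  unfold sumMP. rewrite <- sum_n_m_Rplus.
  apply sum_n_m_ext. intros. apply sum_n_m_Rplus.
Qed.

Lemma sumMP_eq0 n F : (forall m k, in_MP_range n m k -> F m k = 0) -> sumMP n F = 0.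
Proof.
  intros H. rewrite (sumMP_ext n F (fun _ _ => 0 * 0)) by (intros; rewrite H by easy; ring).
  rewrite sumMP_scal. ring.
Qed.

Lemma sumMP_kronecker n m0 k0 (F : nat -> nat -> R) : in_MP_range n m0 k0 ->
  sumMP n (fun m k => if (Nat.eqb m0 m && Nat.eqb k0 k)%bool then F m k else 0) = F m0 k0.
Proof.
  intros [Hm Hk]. unfold sumMP.
  rewrite (sum_n_m_ext _ (fun m => if Nat.eqb m m0
             then sum_n_m (fun k => if Nat.eqb k k0 then F m k else 0) 1 (n / 2 + 1) else 0)).
  - rewrite sum_n_m_kronecker by lia. apply sum_n_m_kronecker. lia.
  - intros m. rewrite Nat.eqb_sym. destruct (Nat.eqb m m0); simpl.
    + apply sum_n_m_ext. intros k. now rewrite Nat.eqb_sym.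
    + now apply sum_n_m_eq0.
Qed.

Lemma sumMP_count n : Nat.even n = true -> sumMP n (fun _ _ => 1) = sum_triangle n (fun _ _ => 1).
Proof.
  intros Hev. rewrite sum_triangle_count. unfold sumMP.
  rewrite (sum_n_m_ext _ (fun _ => INR (n / 2 + 1) * 1)).
  - rewrite sum_n_m_const. replace (S (n + 1) - 1)%nat with (n + 1)%nat by lia.
    assert (Hn := even_double n Hev). set (h := (n / 2)%nat) in *. rewrite Hn.
    rewrite !plus_INR, mult_INR. simpl INR. field.
  - intros. rewrite sum_n_m_const. f_equal. f_equal. lia.
Qed.

Lemma sumMP_nonneg n F : (forall m k, in_MP_range n m k -> 0 <= F m k) -> 0 <= sumMP n F.
Proof.
  intros H. apply sum_n_m_nonneg. intros m Hm. apply sum_n_m_nonneg. intros k Hk.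
  apply H. split; lia.
Qed.

Lemma sumMP_nonneg_eq0 n F : (forall m k, in_MP_range n m k -> 0 <= F m k) ->
  sumMP n F = 0 -> forall m k, in_MP_range n m k -> F m k = 0.
Proof.
  intros H Hs m k [Hm Hk].
  assert (Hrow := sum_n_m_nonneg_eq0 _ _ _
    (fun l Hl => sum_n_m_nonneg _ 1 (n / 2 + 1) (fun k Hk => H l k (conj Hl Hk))) Hs m Hm).
  exact (sum_n_m_nonneg_eq0 _ _ _ (fun k Hk => H m k (conj Hm Hk)) Hrow k Hk).
Qed.

Lemma sum_triangle_sumMP d n F :
  sum_triangle d (fun i j => sumMP n (fun m k => F i j m k))
  = sumMP n (fun m k => sum_triangle d (fun i j => F i j m k)).
Proof.
  unfold sum_triangle, sumMP.
  rewrite (sum_n_m_ext _ (fun i => sum_n_m (fun m => sum_n_m (fun j =>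
             sum_n_m (fun k => F i j m k) 1 (n / 2 + 1)) 0 (d - i)) 1 (n + 1)))
    by (intros; apply sum_n_m_swap).
  rewrite sum_n_m_swap. apply sum_n_m_ext. intros m.
  rewrite (sum_n_m_ext _ (fun i => sum_n_m (fun k => sum_n_m (fun j => F i j m k) 0 (d - i)) 1 (n / 2 + 1)))
    by (intros; apply sum_n_m_swap).
  apply sum_n_m_swap.
Qed.

(** * Cubature at the Morrow-Patterson nodes *)

Definition phiMP (n m k : nat) : R :=
  if Nat.odd m then 2 * INR k * PI / INR (n + 3) else (2 * INR k - 1) * PI / INR (n + 3).

Lemma yMP_phiMP n m k : yMP n m k = cos (phiMP n m k).
Proof. unfold yMP, phiMP. now destruct (Nat.odd m). Qed.

Lemma sumMP_split n (a g : R -> R) : Nat.even n = true ->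
  sumMP n (fun m k => a (INR m * PI / INR (n + 2)) * g (phiMP n m k)) =
  / 2 * (node_sum (n + 2) a * node_sum (n + 3) g
         - alt_node_sum (n + 2) a * alt_node_sum (n + 3) g).
Proof.
  intros Hev. assert (Hn := even_double n Hev).
  set (E := sum_n_m (fun k => g (2 * INR k * PI / INR (n + 3))) 1 (n / 2 + 1) : R).
  set (O := sum_n_m (fun k => g ((2 * INR k - 1) * PI / INR (n + 3))) 1 (n / 2 + 1) : R).
  assert (Hlast : (n + 3 - 1 = 2 * (n / 2 + 1))%nat) by lia.
  assert (Hmult : forall k, (1 <= k)%nat -> INR (2 * k) = 2 * INR k /\ INR (2 * k - 1) = 2 * INR k - 1).
  { intros k Hk. rewrite minus_INR, mult_INR by lia. simpl. split; ring. }
  assert (HE : node_sum (n + 3) g = E + O).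
  { unfold node_sum. rewrite Hlast, sum_n_m_pairs. unfold E, O. rewrite <- sum_n_m_Rplus.
    apply sum_n_m_ext_loc. intros k Hk. now destruct (Hmult k ltac:(lia)) as [-> ->]. }
  assert (HA : alt_node_sum (n + 3) g = E - O).
  { unfold alt_node_sum. rewrite Hlast, (sum_n_m_alt_pairs (fun l => g (INR l * PI / INR (n + 3)))).
    unfold E, O. rewrite <- sum_n_m_Rminus.
    apply sum_n_m_ext_loc. intros k Hk. now destruct (Hmult k ltac:(lia)) as [-> ->]. }
  rewrite HE, HA. unfold sumMP, node_sum, alt_node_sum.
  replace (n + 2 - 1)%nat with (n + 1)%nat by lia.
  transitivity (sum_n_m (fun m => / 2 * (E + O) * a (INR m * PI / INR (n + 2))
                  - / 2 * (E - O) * ((-1) ^ m * a (INR m * PI / INR (n + 2)))) 1 (n + 1)).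
  - apply sum_n_m_ext. intros m.
    rewrite sum_n_m_Rmult_l, pow_neg1_odd. unfold phiMP.
    destruct (Nat.odd m); [fold E | fold O]; simpl; field.
  - rewrite sum_n_m_Rminus, !sum_n_m_Rmult_l. ring.
Qed.

Lemma node_sum_trapezoid N h : h 0 = 0 -> h PI = 0 -> node_sum N h = trapezoid N h.
Proof. intros H0 HPI. unfold trapezoid. rewrite H0, HPI. ring. Qed.

Lemma alt_node_sum_trapezoid N h : h 0 = 0 -> h PI = 0 -> alt_node_sum N h = alt_trapezoid N h.
Proof. intros H0 HPI. unfold alt_trapezoid. rewrite H0, HPI. ring. Qed.

Lemma sumMP_cos_poly_exact n d1 d2 a g : Nat.even n = true ->
  span (cos_gen d1) a -> a 0 = 0 -> a PI = 0 ->
  span (cos_gen d2) g -> g 0 = 0 -> g PI = 0 ->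
  (d1 <= 2 * n + 3)%nat -> (d1 + d2 <= 2 * n + 4)%nat ->
  sumMP n (fun m k => a (INR m * PI / INR (n + 2)) * g (phiMP n m k)) =
  INR (n + 2) * INR (n + 3) / (2 * PI ^ 2) * (RInt a 0 PI * RInt g 0 PI).
Proof.
  intros Hev Ha Ha0 HaPI Hg Hg0 HgPI Hd1 Hd.
  assert (Hpi := PI_RGT_0).
  assert (Halt : alt_node_sum (n + 2) a * alt_node_sum (n + 3) g = 0).
  { rewrite !alt_node_sum_trapezoid by assumption.
    destruct (Compare_dec.le_lt_dec d2 (n + 2)).
    - rewrite (alt_trapezoid_cos_poly_eq0 (n + 3) d2 g) by (lia || assumption). ring.
    - rewrite (alt_trapezoid_cos_poly_eq0 (n + 2) d1 a) by (lia || assumption). ring. }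
  rewrite sumMP_split, Halt, !node_sum_trapezoid by assumption.
  rewrite (trapezoid_exact (n + 2) d1 a), (trapezoid_exact (n + 3) d2 g) by (lia || assumption).
  field. lra.
Qed.

Definition mp_weight (n m k : nat) : R := Cn n * (1 - xMP n m ^ 2) * (1 - yMP n m k ^ 2).

Lemma Cn_cubature_scale n :
  Cn n * (INR (n + 2) * INR (n + 3) / (2 * PI ^ 2)) = 4 / PI ^ 2.
Proof.
  unfold Cn. assert (Hpi := PI_RGT_0).
  assert (0 < INR (n + 2)) by (apply lt_0_INR; lia).
  assert (0 < INR (n + 3)) by (apply lt_0_INR; lia).
  field. repeat split; lra.
Qed.

Lemma sumMP_weight_Ucheb n i j i' j' : Nat.even n = true ->
  (i + j <= n)%nat -> (i' + j' <= n)%nat ->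
  sumMP n (fun m k => mp_weight n m k * (Ucheb i (xMP n m) * Ucheb j (yMP n m k))
                      * (Ucheb i' (xMP n m) * Ucheb j' (yMP n m k)))
  = if (Nat.eqb i i' && Nat.eqb j j')%bool then 1 else 0.
Proof.
  intros Hev Hij Hij'.
  rewrite (sumMP_ext _ _ (fun m k => Cn n * (cheb_prod i i' (INR m * PI / INR (n + 2))
                                              * cheb_prod j j' (phiMP n m k))))
    by (intros; unfold mp_weight, cheb_prod, xMP; rewrite yMP_phiMP; ring).
  rewrite sumMP_scal, (sumMP_cos_poly_exact n (i + i' + 2) (j + j' + 2))
    by first [assumption | lia | apply cheb_prod_cos_poly | apply cheb_prod_0 | apply cheb_prod_PI].
  rewrite !RInt_cheb_prod, <- Rmult_assoc, Cn_cubature_scale.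
  assert (Hpi := PI_RGT_0).
  destruct (Nat.eqb i i'), (Nat.eqb j j'); simpl; field; lra.
Qed.

Lemma sumMP_monomial n i j : Nat.even n = true -> (i + j <= 2 * n)%nat ->
  Cn n * sumMP n (fun m k => (1 - xMP n m ^ 2) * (1 - yMP n m k ^ 2) * (xMP n m ^ i * yMP n m k ^ j))
  = 4 / PI ^ 2 * (RInt (sin2_cos_pow i) 0 PI * RInt (sin2_cos_pow j) 0 PI).
Proof.
  intros Hev Hij.
  rewrite (sumMP_ext _ _ (fun m k => sin2_cos_pow i (INR m * PI / INR (n + 2))
                                     * sin2_cos_pow j (phiMP n m k)))
    by (intros; unfold sin2_cos_pow, xMP; rewrite yMP_phiMP; ring).
  rewrite (sumMP_cos_poly_exact n (i + 2) (j + 2)), <- Rmult_assoc, Cn_cubature_scale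
    by first [assumption | lia | apply sin2_cos_pow_cos_poly | apply sin2_cos_pow_0
              | apply sin2_cos_pow_PI].
  reflexivity.
Qed.

Definition mono_gen (d : nat) (g : R -> R) : Prop :=
  exists p, (p <= d)%nat /\ g = fun x => x ^ p.

Definition cheb_gen (d : nat) (g : R -> R) : Prop :=
  exists i, (i <= d)%nat /\ g = Ucheb i.

Definition mono2_gen (n : nat) (f : R * R -> R) : Prop :=
  exists p q, (p + q <= n)%nat /\ f = fun z => fst z ^ p * snd z ^ q.

Definition cheb2_gen (n : nat) (f : R * R -> R) : Prop :=
  exists i j, (i + j <= n)%nat /\ f = fun z => Ucheb i (fst z) * Ucheb j (snd z).

Lemma pow_cheb_span p : span (cheb_gen p) (fun x => x ^ p).
Proof.
  induction p as [|p IH].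
  - apply span_gen. exists 0%nat. split; [lia | reflexivity].
  - apply (span_ext _ (fun x => x * x ^ p)); [|reflexivity].
    refine (span_mul_comp (cheb_gen p) (cheb_gen (S p)) id id _ _ IH).
    intros g [[|l] [Hl ->]]; unfold id.
    + apply (span_ext _ (fun x => / 2 * Ucheb 1 x)).
      * apply span_scal, span_gen. exists 1%nat. split; [lia | reflexivity].
      * intros x. simpl. field.
    + apply (span_ext _ (fun x => / 2 * Ucheb (S (S l)) x + / 2 * Ucheb l x)).
      * apply span_plus; apply span_scal, span_gen; eexists; split; [|reflexivity| |reflexivity]; lia.
      * intros x. rewrite Ucheb_SS. field.
Qed.

Lemma Ucheb_mono_span i : span (mono_gen i) (Ucheb i).
Proof.
  assert (Hincl : forall d d', (d <= d')%nat -> forall g, span (mono_gen d) g -> span (mono_gen d') g).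
  { intros d d' Hd. apply span_incl. intros g [p [Hp ->]].
    apply span_gen. exists p. split; [lia | reflexivity]. }
  enough (H : span (mono_gen i) (Ucheb i) /\ span (mono_gen (S i)) (Ucheb (S i))) by apply H.
  induction i as [|i [IH1 IH2]].
  - split.
    + apply span_gen. exists 0%nat. split; [lia | reflexivity].
    + apply (span_ext _ (fun x => 2 * x ^ 1)); [|intros; simpl; ring].
      apply span_scal, span_gen. exists 1%nat. split; [lia | reflexivity].
  - split; [exact IH2|].
    apply (span_ext _ (fun x => 2 * (x * Ucheb (S i) x) + (-1) * Ucheb i x)).
    + apply span_plus; apply span_scal.
      * refine (span_mul_comp (mono_gen (S i)) (mono_gen (S (S i))) id id _ _ IH2).
        intros g [p [Hp ->]]. apply (span_ext _ (fun x => x ^ S p)); [|reflexivity].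
        apply span_gen. exists (S p). split; [lia | reflexivity].
      * apply (Hincl i); [lia | exact IH1].
    + intros x. rewrite Ucheb_SS. ring.
Qed.

Lemma mono2_cheb2_span n f : span (mono2_gen n) f -> span (cheb2_gen n) f.
Proof.
  apply span_incl. intros f' [p [q [Hpq ->]]].
  refine (span_tensor (cheb_gen p) (cheb_gen q) _ (fun x => x ^ p) (fun y => y ^ q) _
            (pow_cheb_span p) (pow_cheb_span q)).
  intros a b [i [Hi ->]] [j [Hj ->]].
  apply span_gen. exists i, j. split; [lia | reflexivity].
Qed.

Lemma cheb2_mono2_span n f : span (cheb2_gen n) f -> span (mono2_gen n) f.
Proof.
  apply span_incl. intros f' [i [j [Hij ->]]].
  refine (span_tensor (mono_gen i) (mono_gen j) _ (Ucheb i) (Ucheb j) _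
            (Ucheb_mono_span i) (Ucheb_mono_span j)).
  intros a b [p [Hp ->]] [q [Hq ->]].
  apply span_gen. exists p, q. split; [lia | reflexivity].
Qed.

Lemma poly_eval_triangle n c x y :
  poly_eval n c x y = sum_triangle n (fun i j => c i j * x ^ i * y ^ j).
Proof. reflexivity. Qed.

Lemma inP_mono2_span n q : inP n q -> span (mono2_gen n) (uncurry q).
Proof.
  intros [c Hc].
  apply (span_ext _ (fun z => sum_triangle n (fun i j => c i j * (fst z ^ i * snd z ^ j)))).
  - apply span_sum. intros i Hi. apply span_sum. intros j Hj.
    apply span_scal, span_gen. exists i, j. split; [lia | reflexivity].
  - intros [x y]. simpl. rewrite Hc, poly_eval_triangle.
    apply sum_triangle_ext. intros. ring.
Qed.

Lemma mono2_span_inP n f : span (mono2_gen n) f -> inP n (fun x y => f (x, y)).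
Proof.
  intros Hf. induction Hf as [f [p [q [Hpq ->]]]| | f g _ [c1 H1] _ [c2 H2] | c f _ [c1 H1]
    | f g _ [c1 H1] Hfg].
  - exists (fun i j => if (Nat.eqb i p && Nat.eqb j q)%bool then 1 else 0).
    intros x y. cbn [fst snd]. rewrite poly_eval_triangle, <- (sum_triangle_kronecker n p q (fun i j => x ^ i * y ^ j)) by lia.
    apply sum_triangle_ext. intros i j _. destruct (Nat.eqb i p && Nat.eqb j q)%bool; simpl; ring.
  - exists (fun _ _ => 0). intros x y. rewrite poly_eval_triangle.
    rewrite (sum_triangle_ext n _ (fun i j => 0 * 1)) by (intros; ring).
    rewrite sum_triangle_scal. ring.
  - exists (fun i j => c1 i j + c2 i j). intros x y. simpl.
    rewrite H1, H2, !poly_eval_triangle, <- sum_triangle_plus.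
    apply sum_triangle_ext. intros. ring.
  - exists (fun i j => c * c1 i j). intros x y. simpl.
    rewrite H1, !poly_eval_triangle, <- sum_triangle_scal.
    apply sum_triangle_ext. intros. ring.
  - exists c1. intros x y. rewrite <- Hfg. apply H1.
Qed.

Lemma inP_cheb2_span n q : inP n q <-> span (cheb2_gen n) (uncurry q).
Proof.
  split.
  - intros Hq. now apply mono2_cheb2_span, inP_mono2_span.
  - intros Hq. exact (mono2_span_inP n _ (cheb2_mono2_span n _ Hq)).
Qed.

Lemma Kn_triangle n a b x y :
  Kn n a b x y = sum_triangle n (fun i j => Ucheb i a * Ucheb j b * Ucheb i x * Ucheb j y).
Proof. reflexivity. Qed.

Lemma Kn_cheb2_span n a b : span (cheb2_gen n) (uncurry (Kn n a b)).
Proof.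
  apply (span_ext _ (fun z => sum_triangle n (fun i j =>
           (Ucheb i a * Ucheb j b) * (Ucheb i (fst z) * Ucheb j (snd z))))).
  - apply span_sum. intros i Hi. apply span_sum. intros j Hj.
    apply span_scal, span_gen. exists i, j. split; [lia | reflexivity].
  - intros [x y]. simpl. rewrite Kn_triangle. apply sum_triangle_ext. intros. ring.
Qed.

(** * The reproducing kernel *)

Lemma sumMP_reproducing n r : Nat.even n = true -> span (cheb2_gen n) r -> forall x y,
  sumMP n (fun m k => mp_weight n m k * r (xMP n m, yMP n m k)
                      * Kn n (xMP n m) (yMP n m k) x y) = r (x, y).
Proof.
  intros Hev Hr. induction Hr as [r [i0 [j0 [Hij0 ->]]]| | f g _ IHf _ IHg | c f _ IHf
    | f g _ IHf Hfg]; intros x y; cbn [fst snd].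
  - rewrite (sumMP_ext _ _ (fun m k => sum_triangle n (fun i j => Ucheb i x * Ucheb j y *
        (mp_weight n m k * (Ucheb i0 (xMP n m) * Ucheb j0 (yMP n m k))
         * (Ucheb i (xMP n m) * Ucheb j (yMP n m k))))))
      by (intros; rewrite Kn_triangle, <- sum_triangle_scal; apply sum_triangle_ext; intros; ring).
    rewrite <- sum_triangle_sumMP.
    rewrite (sum_triangle_ext _ _ (fun i j =>
               if (Nat.eqb i i0 && Nat.eqb j j0)%bool then Ucheb i x * Ucheb j y else 0)).
    + now apply sum_triangle_kronecker.
    + intros i j Hij. rewrite sumMP_scal, sumMP_weight_Ucheb by assumption.
      rewrite (Nat.eqb_sym i0 i), (Nat.eqb_sym j0 j).
      destruct (Nat.eqb i i0 && Nat.eqb j j0)%bool; ring.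
  - apply sumMP_eq0. intros. ring.
  - rewrite <- IHf, <- IHg, <- sumMP_plus. apply sumMP_ext. intros. ring.
  - rewrite <- IHf, <- sumMP_scal. apply sumMP_ext. intros. ring.
  - rewrite <- Hfg, <- IHf. apply sumMP_ext. intros. now rewrite Hfg.
Qed.

Lemma sin2_pos t : 0 < t < PI -> 0 < 1 - cos t ^ 2.
Proof.
  intros Ht. assert (Hs := sin_gt_0 t (proj1 Ht) (proj2 Ht)).
  rewrite one_minus_cos_sq. now apply Rmult_lt_0_compat.
Qed.

Lemma angle_in_0_PI p q : 0 < p -> p < q -> 0 < p * PI / q < PI.
Proof.
  intros Hp Hpq. assert (Hpi := PI_RGT_0). split.
  - apply Rdiv_lt_0_compat; nra.
  - apply (Rmult_lt_reg_r q); [lra|]. unfold Rdiv.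
    rewrite Rmult_assoc, Rinv_l by lra. nra.
Qed.

Lemma mp_weight_pos n m k : Nat.even n = true -> in_MP_range n m k -> 0 < mp_weight n m k.
Proof.
  intros Hev [Hm Hk]. assert (Hn := even_double n Hev).
  assert (Hm0 : 0 < INR m) by (apply lt_0_INR; lia).
  assert (Hm2 : INR m < INR (n + 2)) by (apply lt_INR; lia).
  assert (Hk1 : 1 <= INR k) by (apply (le_INR 1); lia).
  assert (Hk2 : 2 * INR k < INR (n + 3)).
  { rewrite <- (mult_INR 2). apply lt_INR. lia. }
  unfold mp_weight, Cn. apply Rmult_lt_0_compat; [apply Rmult_lt_0_compat|].
  - apply Rdiv_lt_0_compat; [lra|]. apply Rmult_lt_0_compat; apply lt_0_INR; lia.
  - apply sin2_pos, angle_in_0_PI; lra.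
  - rewrite yMP_phiMP. apply sin2_pos. unfold phiMP.
    destruct (Nat.odd m); apply angle_in_0_PI; lra.
Qed.

Section KernelKronecker.

Variables (n : nat) (w : nat -> nat -> R) (K : nat -> nat -> nat -> nat -> R).

Hypothesis w_pos : forall m k, in_MP_range n m k -> 0 < w m k.
Hypothesis K_sym : forall m k m' k', K m k m' k' = K m' k' m k.
Hypothesis K_idem : forall m k m' k', in_MP_range n m k -> in_MP_range n m' k' ->
  sumMP n (fun m2 k2 => w m2 k2 * K m k m2 k2 * K m2 k2 m' k') = K m k m' k'.
Hypothesis K_trace : sumMP n (fun m k => w m k * K m k m k) = sumMP n (fun _ _ => 1).

(* [defect a b c d] is the squared entry of [sqrt (w a b * w c d) * K a b c d - delta]; by
   idempotence its row sums are [1 - w a b * K a b a b], so its total is #nodes - trace = 0. *)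
Lemma weighted_kernel_kronecker m k m' k' : in_MP_range n m k -> in_MP_range n m' k' ->
  w m k * K m k m' k' = if (Nat.eqb m m' && Nat.eqb k k')%bool then 1 else 0.
Proof.
  intros Hmk Hmk'.
  set (defect := fun a b c d => if (Nat.eqb a c && Nat.eqb b d)%bool
                               then (w a b * K a b a b - 1) ^ 2
                               else w a b * w c d * K a b c d ^ 2).
  assert (Hnonneg : forall a b c d, in_MP_range n a b -> in_MP_range n c d -> 0 <= defect a b c d).
  { intros a b c d Hab Hcd. unfold defect. destruct (Nat.eqb a c && Nat.eqb b d)%bool.
    - apply pow2_ge_0.
    - assert (0 < w a b) by auto. assert (0 < w c d) by auto.
      apply Rmult_le_pos; [apply Rmult_le_pos; lra | apply pow2_ge_0]. }
  assert (Hrow : forall a b, in_MP_range n a b ->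
            sumMP n (fun c d => defect a b c d) = 1 - w a b * K a b a b).
  { intros a b Hab.
    rewrite (sumMP_ext _ _ (fun c d => w a b * (w c d * K a b c d * K c d a b)
        + (if (Nat.eqb a c && Nat.eqb b d)%bool
           then (w a b * K a b a b - 1) ^ 2 - w a b * w c d * K a b c d ^ 2 else 0))).
    - rewrite sumMP_plus, sumMP_scal, K_idem, sumMP_kronecker by assumption. ring.
    - intros c d _. unfold defect. rewrite (K_sym c d a b).
      destruct (Nat.eqb a c && Nat.eqb b d)%bool; ring. }
  assert (Htotal : sumMP n (fun a b => sumMP n (fun c d => defect a b c d)) = 0).
  { rewrite (sumMP_ext _ _ (fun a b => 1 + (-1) * (w a b * K a b a b))) by
      (intros; rewrite Hrow by assumption; ring).
    rewrite sumMP_plus, sumMP_scal, K_trace. ring. }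
  assert (Hrow0 := sumMP_nonneg_eq0 n _
    (fun a b Hab => sumMP_nonneg n _ (fun c d Hcd => Hnonneg a b c d Hab Hcd)) Htotal m k Hmk).
  assert (Hentry := sumMP_nonneg_eq0 n _ (fun c d Hcd => Hnonneg m k c d Hmk Hcd) Hrow0 m' k' Hmk').
  unfold defect in Hentry. destruct (Nat.eqb m m' && Nat.eqb k k')%bool eqn:Hb.
  - apply andb_prop in Hb as [H1 H2]. apply Nat.eqb_eq in H1, H2. subst m' k'. nra.
  - assert (0 < w m k) by auto. assert (0 < w m' k') by auto.
    assert (Hsq : K m k m' k' ^ 2 = 0).
    { apply (Rmult_eq_reg_l (w m k * w m' k')); [lra|]. apply Rgt_not_eq, Rmult_lt_0_compat; lra. }
    assert (K m k m' k' = 0) as -> by nra. ring.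
Qed.

End KernelKronecker.

Lemma Kn_sym n a b c d : Kn n a b c d = Kn n c d a b.
Proof. rewrite !Kn_triangle. apply sum_triangle_ext. intros. ring. Qed.

Lemma mp_kernel_kronecker n m k m' k' : Nat.even n = true ->
  in_MP_range n m k -> in_MP_range n m' k' ->
  mp_weight n m k * Kn n (xMP n m) (yMP n m k) (xMP n m') (yMP n m' k')
  = if (Nat.eqb m m' && Nat.eqb k k')%bool then 1 else 0.
Proof.
  intros Hev.
  apply (weighted_kernel_kronecker n (mp_weight n)
           (fun m k m' k' => Kn n (xMP n m) (yMP n m k) (xMP n m') (yMP n m' k'))).
  - intros. now apply mp_weight_pos.
  - intros. apply Kn_sym.
  - intros m0 k0 m1 k1 _ _.
    exact (sumMP_reproducing n _ Hev (Kn_cheb2_span n _ _) (xMP n m1) (yMP n m1 k1)).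
  - rewrite sumMP_count by assumption.
    rewrite (sumMP_ext _ _ (fun m k => sum_triangle n (fun i j =>
        mp_weight n m k * (Ucheb i (xMP n m) * Ucheb j (yMP n m k))
        * (Ucheb i (xMP n m) * Ucheb j (yMP n m k)))))
      by (intros; rewrite Kn_triangle, <- sum_triangle_scal; apply sum_triangle_ext; intros; ring).
    rewrite <- sum_triangle_sumMP. apply sum_triangle_ext. intros i j Hij.
    rewrite sumMP_weight_Ucheb, !Nat.eqb_refl by assumption. reflexivity.
Qed.

Lemma is_RInt_sum_triangle n (F : nat -> nat -> R -> R) (I : nat -> nat -> R) a b :
  (forall i j, is_RInt (F i j) a b (I i j)) ->
  is_RInt (fun t => sum_triangle n (fun i j => F i j t)) a b (sum_triangle n I).
Proof.
  intros HF. apply (is_RInt_sum_n_m (fun i t => sum_n_m (fun j => F i j t) 0 (n - i))).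
  intros i. now apply is_RInt_sum_n_m.
Qed.

Definition sqrt_weight_pow (j : nat) (y : R) : R := y ^ j * sqrt (1 - y ^ 2).

Lemma continuous_sqrt_weight_pow j y : continuous (sqrt_weight_pow j) y.
Proof.
  apply (continuous_mult (fun y => y ^ j) (fun y => sqrt (1 - y ^ 2))).
  - apply (ex_derive_continuous (fun y => y ^ j)). auto_derive. easy.
  - apply continuous_sqrt_comp, (ex_derive_continuous (fun y => 1 - y ^ 2)). auto_derive. easy.
Qed.

Lemma is_RInt_sqrt_weight_pow j a b :
  is_RInt (sqrt_weight_pow j) a b (RInt (sqrt_weight_pow j) a b).
Proof.
  apply (RInt_correct (V := R_CompleteNormedModule)), (ex_RInt_continuous (V := R_CompleteNormedModule)).
  intros. apply continuous_sqrt_weight_pow.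
Qed.

Lemma sqrt_sin2 t : 0 <= t <= PI -> sqrt (1 - cos t ^ 2) = sin t.
Proof.
  intros Ht. rewrite one_minus_cos_sq. apply sqrt_square, sin_ge_0; lra.
Qed.

Lemma RInt_sqrt_weight_pow j :
  (RInt (sqrt_weight_pow j) (-1) 1 : R) = RInt (sin2_cos_pow j) 0 PI.
Proof.
  assert (Hpi := PI_RGT_0).
  set (h := fun t => scal (- sin t) (sqrt_weight_pow j (cos t))).
  assert (Hh : ex_RInt h 0 PI).
  { apply (ex_RInt_continuous (V := R_CompleteNormedModule)). intros t _.
    apply (continuous_scal (fun t => - sin t) (fun t => sqrt_weight_pow j (cos t))).
    - apply (ex_derive_continuous (fun t => - sin t)). auto_derive. easy.
    - apply (continuous_comp cos (sqrt_weight_pow j)).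
      + apply (ex_derive_continuous cos). auto_derive. easy.
      + apply continuous_sqrt_weight_pow. }
  rewrite <- cos_PI, <- cos_0.
  rewrite <- (RInt_comp (sqrt_weight_pow j) cos (fun t => - sin t)).
  - fold h. rewrite <- (opp_RInt_swap h), <- (RInt_opp h) by exact Hh.
    apply RInt_ext. intros t Ht. rewrite Rmin_left, Rmax_right in Ht by lra.
    unfold h, sqrt_weight_pow, sin2_cos_pow. rewrite sqrt_sin2 by lra.
    rewrite one_minus_cos_sq. unfold opp, scal; simpl; unfold mult; simpl. ring.
  - intros. apply continuous_sqrt_weight_pow.
  - intros t _. split.
    + auto_derive; [easy | ring].
    + apply (ex_derive_continuous (fun t => - sin t)). auto_derive. easy.
Qed.

Lemma cubature_exact n c : Nat.even n = true ->
  4 / PI ^ 2 *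
    RInt (fun x => RInt (fun y =>
      poly_eval (2 * n) c x y * sqrt (1 - x ^ 2) * sqrt (1 - y ^ 2)) (-1) 1) (-1) 1
  = Cn n * sumMP n (fun m k =>
      (1 - xMP n m ^ 2) * (1 - yMP n m k ^ 2) * poly_eval (2 * n) c (xMP n m) (yMP n m k)).
Proof.
  intros Hev.
  set (I := fun j => RInt (sqrt_weight_pow j) (-1) 1).
  assert (Hinner : forall x, is_RInt (fun y =>
      poly_eval (2 * n) c x y * sqrt (1 - x ^ 2) * sqrt (1 - y ^ 2)) (-1) 1
      (sum_triangle (2 * n) (fun i j => c i j * sqrt_weight_pow i x * I j))).
  { intros x.
    apply (is_RInt_Rext (fun y => sum_triangle (2 * n) (fun i j =>
             c i j * sqrt_weight_pow i x * sqrt_weight_pow j y))).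
    - intros y. rewrite poly_eval_triangle, Rmult_assoc, Rmult_comm, <- sum_triangle_scal.
      apply sum_triangle_ext. intros. unfold sqrt_weight_pow. ring.
    - apply is_RInt_sum_triangle. intros. apply is_RInt_Rmult_l, is_RInt_sqrt_weight_pow. }
  rewrite (is_RInt_unique _ (-1) 1 (sum_triangle (2 * n) (fun i j => c i j * I i * I j))).
  2:{ apply (is_RInt_Rext (fun x => sum_triangle (2 * n) (fun i j =>
               c i j * I j * sqrt_weight_pow i x))).
      - intros x. rewrite (is_RInt_unique _ _ _ _ (Hinner x)).
        apply sum_triangle_ext. intros. ring.
      - apply is_RInt_sum_triangle. intros i j.
        replace (c i j * I i * I j) with (c i j * I j * I i) by ring.
        apply is_RInt_Rmult_l, is_RInt_sqrt_weight_pow. }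
  rewrite (sumMP_ext _ _ (fun m k => sum_triangle (2 * n) (fun i j => c i j *
             ((1 - xMP n m ^ 2) * (1 - yMP n m k ^ 2) * (xMP n m ^ i * yMP n m k ^ j)))))
    by (intros; rewrite poly_eval_triangle, <- sum_triangle_scal;
        apply sum_triangle_ext; intros; ring).
  rewrite <- sum_triangle_sumMP, <- !sum_triangle_scal. apply sum_triangle_ext. intros i j Hij.
  rewrite sumMP_scal.
  transitivity (c i j * (Cn n * sumMP n (fun m k =>
    (1 - xMP n m ^ 2) * (1 - yMP n m k ^ 2) * (xMP n m ^ i * yMP n m k ^ j)))); [|ring].
  rewrite sumMP_monomial by assumption. unfold I. rewrite !RInt_sqrt_weight_pow. ring.
Qed.

(** * Interpolation *)

Lemma omega_mp_weight n m k : Nat.even n = true -> in_MP_range n m k ->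
  omega n m k = mp_weight n m k.
Proof.
  intros Hev Hmk.
  assert (Hone := mp_kernel_kronecker n m k m k Hev Hmk Hmk).
  rewrite !Nat.eqb_refl in Hone. simpl in Hone.
  assert (Homega : omega n m k = / Kn n (xMP n m) (yMP n m k) (xMP n m) (yMP n m k)).
  { unfold omega. f_equal. rewrite Kn_triangle. apply sum_triangle_ext. intros. ring. }
  rewrite Homega.
  assert (Kn n (xMP n m) (yMP n m k) (xMP n m) (yMP n m k) <> 0)
    by (intros Hz; rewrite Hz, Rmult_0_r in Hone; lra).
  apply (Rmult_eq_reg_r (Kn n (xMP n m) (yMP n m k) (xMP n m) (yMP n m k))); [|easy].
  rewrite Hone, Rinv_l; easy.
Qed.

Definition mp_lagrange (n m k : nat) (x y : R) : R :=
  mp_weight n m k * Kn n (xMP n m) (yMP n m k) x y.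

Lemma mp_lagrange_cheb2_span n m k : span (cheb2_gen n) (uncurry (mp_lagrange n m k)).
Proof.
  apply (span_ext _ (fun z => mp_weight n m k * uncurry (Kn n (xMP n m) (yMP n m k)) z)).
  - apply span_scal, Kn_cheb2_span.
  - now intros [x y].
Qed.

Lemma mp_lagrange_is_lagrange n : Nat.even n = true -> is_lagrange n (mp_lagrange n).
Proof.
  intros Hev m k Hmk. split.
  - apply inP_cheb2_span, mp_lagrange_cheb2_span.
  - intros m' k' Hmk'. now apply mp_kernel_kronecker.
Qed.

Lemma is_lagrange_mp_lagrange n l : Nat.even n = true -> is_lagrange n l ->
  forall m k x y, in_MP_range n m k -> l m k x y = mp_lagrange n m k x y.
Proof.
  intros Hev Hl m k x y Hmk. destruct (Hl m k Hmk) as [HP Hnodes].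
  change (l m k x y) with (uncurry (l m k) (x, y)).
  rewrite <- (sumMP_reproducing n (uncurry (l m k)) Hev (proj1 (inP_cheb2_span n _) HP) x y).
  rewrite (sumMP_ext _ _ (fun m' k' => if (Nat.eqb m m' && Nat.eqb k k')%bool
                                       then mp_lagrange n m' k' x y else 0)).
  - now rewrite sumMP_kronecker.
  - intros m' k' Hmk'. cbn [uncurry]. rewrite Hnodes by assumption.
    unfold mp_lagrange. destruct (Nat.eqb m m' && Nat.eqb k k')%bool; ring.
Qed.

Lemma Ln_mp_lagrange n f x y :
  Ln n f x y = sumMP n (fun m k => f (xMP n m) (yMP n m k) * mp_lagrange n m k x y).
Proof.
  unfold Ln. rewrite <- sumMP_scal. apply sumMP_ext. intros.
  unfold mp_lagrange, mp_weight. ring.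
Qed.

Lemma Ln_inP n f : inP n (Ln n f).
Proof.
  apply inP_cheb2_span.
  apply (span_ext _ (fun z => sumMP n (fun m k =>
           f (xMP n m) (yMP n m k) * uncurry (mp_lagrange n m k) z))).
  - apply span_sum. intros m _. apply span_sum. intros k _.
    apply span_scal, mp_lagrange_cheb2_span.
  - intros [x y]. symmetry. apply Ln_mp_lagrange.
Qed.

Lemma Ln_interpolates n f m k : Nat.even n = true -> in_MP_range n m k ->
  Ln n f (xMP n m) (yMP n m k) = f (xMP n m) (yMP n m k).
Proof.
  intros Hev Hmk. rewrite Ln_mp_lagrange.
  rewrite (sumMP_ext _ _ (fun m' k' => if (Nat.eqb m m' && Nat.eqb k k')%bool
                                       then f (xMP n m') (yMP n m' k') else 0)).
  - now rewrite sumMP_kronecker.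
  - intros m' k' Hmk'. unfold mp_lagrange.
    rewrite mp_kernel_kronecker, (Nat.eqb_sym m'), (Nat.eqb_sym k') by assumption.
    destruct (Nat.eqb m m' && Nat.eqb k k')%bool; ring.
Qed.

Theorem theorem4 (n : nat) (Hpos : (0 < n)%nat) (Heven : Nat.even n = true) :
  (* (i) cubature formula exact on P^2_{2n} *)
  (forall c : nat -> nat -> R,
     4 / PI ^ 2 *
       RInt (fun x => RInt (fun y =>
         poly_eval (2 * n) c x y * sqrt (1 - x ^ 2) * sqrt (1 - y ^ 2)) (-1) 1) (-1) 1
     = Cn n * sumMP n (fun m k =>
         (1 - xMP n m ^ 2) * (1 - yMP n m k ^ 2) * poly_eval (2 * n) c (xMP n m) (yMP n m k)))
  /\
  (* (ii) the weights *)
  (forall m k, in_MP_range n m k ->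
     omega n m k = Cn n * (1 - xMP n m ^ 2) * (1 - yMP n m k ^ 2))
  /\
  (* (iii) L_n f is the (_,_)_* projection onto P^2_n and interpolates at MP_n *)
  (forall f : R -> R -> R, contQ f ->
     inP n (Ln n f)
     /\ (forall q, inP n q -> dinner n (fun x y => f x y - Ln n f x y) q = 0)
     /\ (forall m k, in_MP_range n m k ->
           Ln n f (xMP n m) (yMP n m k) = f (xMP n m) (yMP n m k)))
  /\
  (* (iv) Lebesgue function *)
  ((exists l, is_lagrange n l) /\
   forall l, is_lagrange n l -> forall x y, inQ x y ->
     lebesgue_fun n l x y =
       Cn n * sumMP n (fun m k =>
         (1 - xMP n m ^ 2) * (1 - yMP n m k ^ 2)
         * Rabs (Kn n (xMP n m) (yMP n m k) x y))).
Proof.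
  split; [|split; [|split]].
  - intros c. now apply cubature_exact.
  - intros m k Hmk. now apply omega_mp_weight.
  - intros f _. split; [|split].
    + apply Ln_inP.
    + intros q _. unfold dinner. rewrite sumMP_eq0; [ring|].
      intros m k Hmk. rewrite Ln_interpolates by assumption. ring.
    + intros m k Hmk. now apply Ln_interpolates.
  - split.
    + exists (mp_lagrange n). now apply mp_lagrange_is_lagrange.
    + intros l Hl x y _. unfold lebesgue_fun. rewrite <- sumMP_scal.
      apply sumMP_ext. intros m k Hmk.
      rewrite (is_lagrange_mp_lagrange n l Heven Hl) by assumption. unfold mp_lagrange.
      rewrite Rabs_mult, (Rabs_pos_eq (mp_weight n m k)) by (now apply Rlt_le, mp_weight_pos).
      unfold mp_weight. ring.
Qed.
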